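(* The rational map $\mathbb{P}^2 \dashrightarrow \mathbb{P}^3$, $(r:s:t) \mapsto (w:x:y:z)$ with \[ (w:x:y:z) = (r^3 - s^3 : s^3 + t^3 : r^2s - s^2t + t^2r : r^2t - s^2r - t^2s), \] defined over $\mathbb{Q}$, is a birational map from $\mathbb{P}^2$ onto the cubic surface $S_3: wx(w+x) = y^3 + z^3$. Moreover, for this parametrization $wx(w+x)$, as a homogeneous polynomial of degree $9$ in $r,s,t$, factors over $\mathbb{Q}$ as a product of three linear and three quadratic factors.
   Context: No additional context. *)

From HB Require Import structures.
From mathcomp Require Import all_boot all_algebra.
From mathcomp Require Import mpoly.

Set Implicit Arguments.
Unset Strict Implicit.
Unset Printing Implicit Defensive.

Import GRing.Theory.
Local Open Scope ring_scope.

(** Homogeneous coordinates (r:s:t) of P^2 : polynomials in {mpoly rat[3]};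
    homogeneous coordinates (w:x:y:z) of P^3 : polynomials in {mpoly rat[4]}. *)

Definition pr : {mpoly rat[3]} := 'X_(inord 0).
Definition ps : {mpoly rat[3]} := 'X_(inord 1).
Definition pt : {mpoly rat[3]} := 'X_(inord 2).

Definition qw : {mpoly rat[4]} := 'X_(inord 0).
Definition qx : {mpoly rat[4]} := 'X_(inord 1).
Definition qy : {mpoly rat[4]} := 'X_(inord 2).
Definition qz : {mpoly rat[4]} := 'X_(inord 3).

Definition phi17 : 4.-tuple {mpoly rat[3]} :=
  [tuple pr ^+ 3 - ps ^+ 3;
         ps ^+ 3 + pt ^+ 3;
         pr ^+ 2 * ps - ps ^+ 2 * pt + pt ^+ 2 * pr;
         pr ^+ 2 * pt - ps ^+ 2 * pr - pt ^+ 2 * ps].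

Definition wxwx : {mpoly rat[4]} := qw * qx * (qw + qx).
Definition S3eq : {mpoly rat[4]} := wxwx - (qy ^+ 3 + qz ^+ 3).

(** A rational map P^(m-1) --> P^(n-1) given by n homogeneous polynomials
    of a common degree in m variables, not all zero. *)
Definition rat_map (m n : nat) (f : n.-tuple {mpoly rat[m]}) : Prop :=
  (exists e : nat, forall i, tnth f i \is e.-homog) /\
  (exists i, tnth f i != 0).

(** [f] : P^(m-1) --> P^(n-1) is a birational map onto the (irreducible)
    hypersurface {F = 0} of P^(n-1), all defined over Q:
    - f is a rational map whose image lies in {F = 0};
    - there is a rational map g : {F = 0} --> P^(m-1) (homogeneous
      polynomials of a common degree in the coordinates of P^(n-1)) such that
      g o f = id as rational maps of P^(m-1)  (g(f(p)) = h(p) . p, h <> 0), and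
      f o g = id as rational maps of {F = 0}  (f(g(q)) = k(q) . q modulo F,
      with k not vanishing identically on {F = 0}, i.e. F does not divide k). *)
Definition birational_onto_hypersurface (m n : nat)
    (f : n.-tuple {mpoly rat[m]}) (F : {mpoly rat[n]}) : Prop :=
  rat_map f /\
  F \mPo f = 0 /\
  exists (d : nat) (g : m.-tuple {mpoly rat[n]}),
    (forall j, tnth g j \is d.-homog) /\
    (exists h : {mpoly rat[m]}, h != 0 /\
        forall j, tnth g j \mPo f = h * 'X_j) /\
    (exists k : {mpoly rat[n]}, (~ exists c, k = c * F) /\
        forall i, exists q : {mpoly rat[n]}, tnth f i \mPo g = k * 'X_i + q * F).

Definition mirreducible (m : nat) (p : {mpoly rat[m]}) : Prop :=
  (1 < msize p)%N /\
  forall a b : {mpoly rat[m]}, p = a * b -> msize a = 1%N \/ msize b = 1%N.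

(** The inverse of the parametrization is (w:x:y:z) |-> (y^2 - wz : wx - yz : xy - z^2):
    either composite is the identity up to a scalar polynomial factor, [h17] on
    P^2 and [k17] modulo the cubic, and [k17] does not vanish on all of S_3.
    For the factorization, w = r^3 - s^3, x = s^3 + t^3 and w + x = r^3 + t^3
    each split as a linear form times a quadratic cofactor.  These quadrics are
    irreducible over Q because on a suitable rational line they restrict to
    u^2 +- u + 1, which has no real root, whereas a product of two forms of
    degree at most one restricts to a product of two affine functions. *)
From HB Require Import structures.
From mathcomp Require Import all_boot all_algebra.
From mathcomp Require Import mpoly.
From mathcomp Require Import ring lra zify.
Import GRing.Theory Num.Theory.
Local Open Scope ring_scope.

Set Implicit Arguments.
Unset Strict Implicit.
Unset Printing Implicit Defensive.

Section MpolyFacts.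
Variables (n : nat) (R : comNzRingType).
Implicit Types (p q : {mpoly R[n]}) (v w : 'I_n -> R).

Lemma msize_dhomog d p : p \is d.-homog -> (msize p <= d.+1)%N.
Proof.
move=> hom_p; rewrite msizeE big_seq.
apply: (big_ind (fun k => k <= d.+1)%N) => // [k l|m]; first by rewrite geq_max => ->.
by move=> /(dhomog_mf hom_p) ->.
Qed.

Lemma dhomogX1 (i : 'I_n) : ('X_i : {mpoly R[n]}) \is 1.-homog.
Proof. by rewrite dhomogX; apply/eqP; apply: mdeg1. Qed.

Lemma dhomogM_eq d e f p q :
  p \is d.-homog -> q \is e.-homog -> (d + e = f)%N -> p * q \is f.-homog.
Proof. by move=> hom_p hom_q <-; apply: dhomogM. Qed.

Lemma dhomogMn_eq d f k p : p \is d.-homog -> (d * k = f)%N -> p ^+ k \is f.-homog.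
Proof. by move=> hom_p <-; apply: dhomogMn. Qed.

Lemma meval_line_affine p v w (u : R) : (msize p <= 2)%N ->
  p.@[fun i => v i + u * w i] = p.@[v] + u * (p.@[fun i => v i + w i] - p.@[v]).
Proof.
move=> size_p; rewrite !mevalE -sumrB mulr_sumr -big_split /=.
apply: eq_big_seq => m /msize_mdeg_lt lt_m; rewrite -!mevalX.
have [/eqP|deg_m] := eqVneq (mdeg m) 0%N.
  by rewrite mdeg_eq0 => /eqP ->; rewrite mpolyX0 !meval1; ring.
have /mdeg1P [i /eqP ->] : mdeg m == 1%N.
  by rewrite eqn_leq lt0n deg_m andbT -ltnS (leq_trans lt_m size_p).
by rewrite !mevalXU; ring.
Qed.

End MpolyFacts.

Section MpolyInord.
Variables (R : comNzRingType) (n k : nat).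

Lemma mpolyX_inord (i : 'I_n.+1) : ('X_i : {mpoly R[n.+1]}) = 'X_(inord i).
Proof. by rewrite inord_val. Qed.

Lemma comp_mpolyX_inord (lq : n.+1.-tuple {mpoly R[k]}) i : (i < n.+1)%N ->
  'X_(inord i) \mPo lq = lq`_i.
Proof. by move=> lt_i; rewrite comp_mpolyXU inordK. Qed.

End MpolyInord.

Lemma pos_quadratic_neq_affine_mul (R : realFieldType) (c a0 a1 b0 b1 : R) :
  c ^+ 2 < 4 ->
  ~ (forall u, (a0 + u * a1) * (b0 + u * b1) = u ^+ 2 + c * u + 1).
Proof.
move=> c_lt4 eq_ab.
have a1b1 : a1 * b1 = 1.
  have := eq_ab 0; have := eq_ab 1; have := eq_ab (-1).
  rewrite !expr2 => e1 e2 e3; nra.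
have a1_neq0 : a1 != 0 by apply/eqP => a1_0; move: a1b1; rewrite a1_0 mul0r; lra.
set u0 := - a0 / a1.
have := eq_ab u0; rewrite /u0 divfK // subrr mul0r => root_u0.
have : 0 < (2 * u0 + c) ^+ 2 + (4 - c ^+ 2) by rewrite ltr_wpDl ?sqr_ge0 ?subr_gt0.
rewrite /u0 !expr2 in root_u0 *; nra.
Qed.

Lemma mirreducible_dhomog2 n (q : {mpoly rat[n]}) (v w : 'I_n -> rat) (c : rat) :
  q \is 2.-homog -> c ^+ 2 < 4 ->
  (forall u, q.@[fun i => v i + u * w i] = u ^+ 2 + c * u + 1) ->
  mirreducible q.
Proof.
move=> hom_q c_lt4 q_line.
have q_nonconst : (1 < msize q)%N.
  rewrite ltnNge; apply/negP => /msize1_polyC q_const.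
  have := q_line 0; have := q_line 1; have := q_line (-1).
  rewrite q_const !mevalC !expr2; lra.
split=> // a b q_ab.
have q_neq0 : q != 0 by rewrite -msize_poly_eq0 -lt0n (ltn_trans _ q_nonconst).
have a_neq0 : a != 0 by apply: contraNneq q_neq0 => a0; rewrite q_ab a0 mul0r.
have b_neq0 : b != 0 by apply: contraNneq q_neq0 => b0; rewrite q_ab b0 mulr0.
have [|a_nonconst] := eqVneq (msize a) 1%N; first by left.
have [|b_nonconst] := eqVneq (msize b) 1%N; first by right.
exfalso.
have [size_a size_b] : (msize a <= 2)%N /\ (msize b <= 2)%N.
  have := msizeM a_neq0 b_neq0; rewrite -q_ab -subn1.
  move: (msize_dhomog hom_q) a_nonconst b_nonconst.
  rewrite -!msize_poly_eq0 in a_neq0 b_neq0; move: a_neq0 b_neq0.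
  move: (msize a) (msize b) (msize q); lia.
apply: (pos_quadratic_neq_affine_mul (a0 := a.@[v]) (b0 := b.@[v])
  (a1 := a.@[fun i => v i + w i] - a.@[v]) (b1 := b.@[fun i => v i + w i] - b.@[v]) c_lt4).
by move=> u; rewrite -q_line q_ab mevalM !meval_line_affine.
Qed.

Ltac dhomog_tac := repeat first
  [ apply: rpredB | apply: rpredD | apply: dhomogM_eq
  | apply: dhomogMn_eq | apply: dhomogX1 | reflexivity ].

Ltac comp_mpoly_expand :=
  rewrite ?(rmorphB, rmorphD, rmorphM, rmorphXn) /= ?comp_mpolyX_inord //=.

Ltac meval_expand :=
  rewrite ?(rmorphB, rmorphD, rmorphM, rmorphXn, rmorphN, rmorph_nat, rmorph1, rmorph0)
    /= ?mevalXU ?inordK //=.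

Definition psi17 : 3.-tuple {mpoly rat[4]} :=
  [tuple qy ^+ 2 - qw * qz; qw * qx - qy * qz; qx * qy - qz ^+ 2].

Definition h17 : {mpoly rat[3]} :=
  2%:R * pr ^+ 3 * ps ^+ 2 - pr * ps ^+ 3 * pt + 3%:R * pr ^+ 2 * ps * pt ^+ 2
  - 2%:R * ps ^+ 2 * pt ^+ 3 + pr * pt ^+ 4 - pr ^+ 4 * pt - ps ^+ 5.

Definition k17 : {mpoly rat[4]} :=
  - 3%:R * qy ^+ 4 * qz + 3%:R * qw * qy ^+ 2 * qz ^+ 2 - qw ^+ 2 * qx ^+ 3
  + 3%:R * qw * qx ^+ 2 * qy * qz - 3%:R * qx * qy ^+ 2 * qz ^+ 2 - qw ^+ 4 * qx
  - qw ^+ 3 * qx ^+ 2 + qw ^+ 2 * qy ^+ 3 + qw * qx * qy ^+ 3 + qx ^+ 2 * qy ^+ 3.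

Definition cofactor17 : 4.-tuple {mpoly rat[4]} :=
  [tuple qw ^+ 3 - qy ^+ 3;
         qz ^+ 3 - 3%:R * qx * qy * qz + qw ^+ 2 * qx + qw * qx ^+ 2;
         qw * qz ^+ 2 - 2%:R * qy ^+ 2 * qz + qw ^+ 2 * qy;
         - qy * qz ^+ 2 + qw ^+ 2 * qz + qw * qx * qz - qx * qy ^+ 2].

Lemma phi17_dhomog i : tnth phi17 i \is 3.-homog.
Proof. by case: i => [[|[|[|[|//]]]] ?]; rewrite /tnth /= /pr /ps /pt; dhomog_tac. Qed.

Lemma phi17_neq0 : tnth phi17 ord0 != 0.
Proof.
apply/eqP => /(congr1 (meval (fun j : 'I_3 => nth 0 [:: 1; 0; 0] j))).
by rewrite meval0 /tnth /= /pr /ps /pt; meval_expand.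
Qed.

Lemma rat_map_phi17 : rat_map phi17.
Proof. by split; [exists 3%N; apply: phi17_dhomog | exists ord0; apply: phi17_neq0]. Qed.

Lemma S3eq_comp_phi17 : S3eq \mPo phi17 = 0.
Proof. by rewrite /S3eq /wxwx /qw /qx /qy /qz; comp_mpoly_expand; ring. Qed.

Lemma psi17_dhomog j : tnth psi17 j \is 2.-homog.
Proof. by case: j => [[|[|[|//]]] ?]; rewrite /tnth /= /qw /qx /qy /qz; dhomog_tac. Qed.

Lemma psi17_comp_phi17 j : tnth psi17 j \mPo phi17 = h17 * 'X_j.
Proof.
rewrite mpolyX_inord; case: j => [[|[|[|//]]] ?] /=;
  rewrite /psi17 /tnth /= /qw /qx /qy /qz; comp_mpoly_expand;
  rewrite /h17 /pr /ps /pt; ring.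
Qed.

Lemma phi17_comp_psi17 i :
  tnth phi17 i \mPo psi17 = k17 * 'X_i + tnth cofactor17 i * S3eq.
Proof.
rewrite mpolyX_inord; case: i => [[|[|[|[|//]]]] ?] /=;
  rewrite /phi17 /tnth /= /pr /ps /pt; comp_mpoly_expand;
  rewrite /k17 /cofactor17 /S3eq /wxwx /qw /qx /qy /qz /=; ring.
Qed.

Lemma h17_neq0 : h17 != 0.
Proof.
apply/eqP => /(congr1 (meval (fun j : 'I_3 => nth 0 [:: 1; 1; 0] j))).
by rewrite meval0 /h17 /pr /ps /pt; meval_expand.
Qed.

(* (0 : 1 : 1 : -1) lies on S_3 but k17 does not vanish there. *)
Lemma k17_not_multiple_S3eq : ~ exists c, k17 = c * S3eq.
Proof.
move=> [c /(congr1 (meval (fun j : 'I_4 => nth 0 [:: 0; 1; 1; -1] j)))].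
rewrite mevalM /k17 /S3eq /wxwx /qw /qx /qy /qz; meval_expand; lra.
Qed.

Lemma birational_phi17 : birational_onto_hypersurface phi17 S3eq.
Proof.
split; first exact: rat_map_phi17.
split; first exact: S3eq_comp_phi17.
exists 2%N, psi17; split; first exact: psi17_dhomog.
split; first by exists h17; split; [exact: h17_neq0 | exact: psi17_comp_phi17].
exists k17; split; first exact: k17_not_multiple_S3eq.
by move=> i; exists (tnth cofactor17 i); apply: phi17_comp_psi17.
Qed.

Definition quad_rs : {mpoly rat[3]} := pr ^+ 2 + pr * ps + ps ^+ 2.
Definition quad_st : {mpoly rat[3]} := ps ^+ 2 - ps * pt + pt ^+ 2.
Definition quad_rt : {mpoly rat[3]} := pr ^+ 2 - pr * pt + pt ^+ 2.

Lemma wxwx_comp_phi17 : wxwx \mPo phi17 =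
  (pr - ps) * (ps + pt) * (pr + pt) * (quad_rs * quad_st * quad_rt).
Proof.
rewrite /wxwx /qw /qx; comp_mpoly_expand.
by rewrite /quad_rs /quad_st /quad_rt; ring.
Qed.

Lemma quad_rs_mirreducible : mirreducible quad_rs.
Proof.
apply: (@mirreducible_dhomog2 _ _ (fun j => nth 0 [:: 0; 1; 0] j)
  (fun j => nth 0 [:: 1; 0; 0] j) 1); rewrite /quad_rs /pr /ps; try lra.
  by dhomog_tac.
by move=> u; meval_expand; ring.
Qed.

Lemma quad_st_mirreducible : mirreducible quad_st.
Proof.
apply: (@mirreducible_dhomog2 _ _ (fun j => nth 0 [:: 0; 1; 0] j)
  (fun j => nth 0 [:: 0; 0; 1] j) (-1)); rewrite /quad_st /ps /pt; try lra.
  by dhomog_tac.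
by move=> u; meval_expand; ring.
Qed.

Lemma quad_rt_mirreducible : mirreducible quad_rt.
Proof.
apply: (@mirreducible_dhomog2 _ _ (fun j => nth 0 [:: 0; 0; 1] j)
  (fun j => nth 0 [:: 1; 0; 0] j) (-1)); rewrite /quad_rt /pr /pt; try lra.
  by dhomog_tac.
by move=> u; meval_expand; ring.
Qed.

Theorem mainTheorem17 :
  birational_onto_hypersurface phi17 S3eq /\
  exists l1 l2 l3 q1 q2 q3 : {mpoly rat[3]},
    [/\ l1 \is 1.-homog, l2 \is 1.-homog & l3 \is 1.-homog] /\
    [/\ q1 \is 2.-homog, q2 \is 2.-homog & q3 \is 2.-homog] /\
    [/\ mirreducible q1, mirreducible q2 & mirreducible q3] /\
    wxwx \mPo phi17 = l1 * l2 * l3 * (q1 * q2 * q3).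
Proof.
split; first exact: birational_phi17.
exists (pr - ps), (ps + pt), (pr + pt), quad_rs, quad_st, quad_rt.
split; first by split; rewrite /pr /ps /pt; dhomog_tac.
split; first by split; rewrite /quad_rs /quad_st /quad_rt /pr /ps /pt; dhomog_tac.
split; last exact: wxwx_comp_phi17.
by split; [exact: quad_rs_mirreducible | exact: quad_st_mirreducible
          | exact: quad_rt_mirreducible].
Qed.
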